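(* Let $\Omega\subset\mathbb{R}^n$ be a nonempty closed convex set and $f:\mathbb{R}^n\to\mathbb{R}$ differentiable over $\Omega$ such that (i) $f(\bm{x})\ge\underline{f}$ for all $\bm{x}\in\Omega$, (ii) $\|\nabla f(\bm{x})-\nabla f(\bm{y})\|_2\le L\|\bm{x}-\bm{y}\|_2$ for all $\bm{x},\bm{y}\in\Omega$ for some $L>0$, and (iii) the relaxation sequence $\{\omega_k\}\subset[0,\infty)$ satisfies $\sum_{k=0}^\infty\omega_k<\infty$. Suppose $\{\bm{x}_k\}$ is generated by either IGPM without line search or IGPM with line search (described in the context), with $\bm{z}_k$ the inexact projections and $\bm{z}_k^*$ the exact minimizer of $p(\cdot;\bm{x}_k)$. Then \[\lim_{k\to\infty}\Delta p(\bm{z}_k;\bm{x}_k)=0\quad\text{and}\quad\lim_{k\to\infty}\Delta p(\bm{z}_k^*;\bm{x}_k)=0.\]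
   Context: Problem: minimize $f(\bm{x})$ subject to $\bm{x}\in\Omega$. For $\bm{x}_k\in\Omega$ write $\bm{g}_k=\nabla f(\bm{x}_k)$, $\bm{v}_k=\bm{x}_k-\beta\bm{g}_k$ for a fixed $\beta>0$, and define $p(\bm{z};\bm{x}_k)=\tfrac12\|\bm{z}-\bm{v}_k\|_2^2+\delta_\Omega(\bm{z})$ ($\delta_\Omega$ the $0/+\infty$ indicator of $\Omega$), $\bm{z}_k^*=\arg\min_{\bm{z}}p(\bm{z};\bm{x}_k)$ (the Euclidean projection of $\bm{v}_k$ onto $\Omega$), $\Delta p(\bm{z};\bm{x}_k)=p(\bm{x}_k;\bm{x}_k)-p(\bm{z};\bm{x}_k)$, and $q(\bm{u};\bm{x}_k)=-\tfrac12\|\bm{u}-\bm{v}_k\|_2^2-\delta_\Omega^*(\bm{u})+\tfrac12\|\bm{v}_k\|_2^2$ with $\delta^*_\Omega(\bm{u})=\sup_{\bm{x}\in\Omega}\langle\bm{x},\bm{u}\rangle$. An inexact projection at iteration $k$ is a point $\bm{z}_k\in\Omega$ with $\Delta p(\bm{z}_k;\bm{x}_k)\ge0$ together with some dual point $\bm{u}_k$ such that $\frac{p(\bm{x}_k;\bm{x}_k)-p(\bm{z}_k;\bm{x}_k)+\omega_k}{p(\bm{x}_k;\bm{x}_k)-q(\bm{u}_k;\bm{x}_k)+\omega_k}\ge\gamma$, where $0<\gamma<1$. IGPM without line search: $0<\beta\le1/L$, $\bm{x}_0\in\Omega$, and $\bm{x}_{k+1}=\bm{z}_k$ for all $k$.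 IGPM with line search: fix $0<\eta<1$, $0<\alpha\le1$, $\beta>0$, $0<\theta<1$, $\bm{x}_0\in\Omega$; set $\bm{d}_k=\bm{z}_k-\bm{x}_k$, let $\alpha_k$ be the largest value in $\{\theta^i\alpha: i=0,1,2,\dots\}$ with $f(\bm{x}_k+\alpha_k\bm{d}_k)\le f(\bm{x}_k)+\eta\alpha_k\bm{g}_k^T\bm{d}_k$, and set $\bm{x}_{k+1}=\bm{x}_k+\alpha_k\bm{d}_k$. The algorithms are considered as generating infinite sequences. *)

From HB Require Import structures.
From mathcomp Require Import all_boot all_order all_algebra.
From mathcomp Require Import all_classical all_reals all_analysis.
Set Implicit Arguments. Unset Strict Implicit. Unset Printing Implicit Defensive.
Import Order.TTheory GRing.Theory Num.Theory.
Import numFieldNormedType.Exports.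
Local Open Scope classical_set_scope.
Local Open Scope ring_scope.

Section IGPM.
Variables (R : realType) (n : nat).
Notation vec := 'rV[R]_n.

Definition dotv (x y : vec) : R := \sum_(i < n) x ord0 i * y ord0 i.
Definition norm2 (x : vec) : R := Num.sqrt (dotv x x).

Definition convexR (Omega : set vec) : Prop :=
  convex_set (Omega : set (convex_lmodType vec)).

Definition is_gradient (f : vec -> R) (x g : vec) : Prop :=
  differentiable f x /\ forall v : vec, 'd f x v = dotv g v.

Definition vpt (beta : R) (x gx : vec) : vec := x - beta *: gx.

(* p(z; x_k) restricted to z in Omega, where the indicator vanishes *)
Definition pval (beta : R) (x gx z : vec) : R :=
  (norm2 (z - vpt beta x gx)) ^+ 2 / 2.

Definition Deltap (beta : R) (x gx z : vec) : R :=
  pval beta x gx x - pval beta x gx z.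

Definition suppf (Omega : set vec) (u : vec) : \bar R :=
  ereal_sup [set (dotv y u)%:E | y in Omega].

(* p(x_k;x_k) - q(u;x_k) + omega_k, as an extended real
   (q(u;x) = -1/2||u-v||^2 - delta^*(u) + 1/2||v||^2) *)
Definition gapden (Omega : set vec) (beta : R) (x gx u : vec) (om : R) : \bar R :=
  (pval beta x gx x + (norm2 (u - vpt beta x gx)) ^+ 2 / 2
     - (norm2 (vpt beta x gx)) ^+ 2 / 2 + om)%:E + suppf Omega u.

(* z is an inexact projection at x (with gradient gx) for relaxation om:
   z in Omega, Delta p(z;x) >= 0, and some dual point u satisfies
   (Delta p(z;x) + om) / (p(x;x) - q(u;x) + om) >= gamma,
   written in multiplied-out form. *)
Definition inexact_proj (Omega : set vec) (beta gamma : R) (x gx : vec) (om : R)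
    (z : vec) : Prop :=
  Omega z /\ 0 <= Deltap beta x gx z /\
  exists u : vec,
    (gamma%:E * gapden Omega beta x gx u om <= (Deltap beta x gx z + om)%:E)%E.

Definition IGPM_noLS (Omega : set vec) (g : vec -> vec) (L beta gamma : R)
    (omega : nat -> R) (x z : nat -> vec) : Prop :=
  0 < beta /\ beta <= 1 / L /\ Omega (x 0%N) /\
  forall k, inexact_proj Omega beta gamma (x k) (g (x k)) (omega k) (z k) /\
            x k.+1 = z k.

Definition armijo (f : vec -> R) (eta : R) (xk gk d : vec) (a : R) : Prop :=
  f (xk + a *: d) <= f xk + eta * a * dotv gk d.

Definition IGPM_LS (Omega : set vec) (f : vec -> R) (g : vec -> vec)
    (eta alpha beta theta gamma : R)
    (omega : nat -> R) (x z : nat -> vec) : Prop :=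
  0 < eta < 1 /\ 0 < alpha <= 1 /\ 0 < beta /\ 0 < theta < 1 /\ Omega (x 0%N) /\
  forall k, inexact_proj Omega beta gamma (x k) (g (x k)) (omega k) (z k) /\
    exists i : nat,
      armijo f eta (x k) (g (x k)) (z k - x k) (theta ^+ i * alpha) /\
      (forall j : nat, (j < i)%N ->
         ~ armijo f eta (x k) (g (x k)) (z k - x k) (theta ^+ j * alpha)) /\
      x k.+1 = x k + (theta ^+ i * alpha) *: (z k - x k).

End IGPM.

(* Both variants decrease f by a fixed multiple of Δp(z_k; x_k) at every step:
   without line search by the descent lemma for the L-smooth f and β ≤ 1/L;
   with line search by the Armijo condition, because a rejected trial step t
   forces 1 - η < β L t, so the accepted step stays above
   min(α, θ (1 - η) / (β L)).  As f is bounded below on Ω these decreases are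
   summable, hence Δp(z_k; x_k) → 0.  Weak duality bounds p(x_k; x_k) - q(u; x_k)
   below by Δp(w; x_k) for every w ∈ Ω, so the inexactness criterion yields
   γ Δp(z*_k; x_k) ≤ Δp(z_k; x_k) + ω_k → 0. *)

From HB Require Import structures.
From mathcomp Require Import all_boot all_order all_algebra.
From mathcomp Require Import all_classical all_reals all_analysis.
From mathcomp Require Import ring lra.
Import Order.TTheory GRing.Theory Num.Theory.
Import numFieldNormedType.Exports.
Local Open Scope classical_set_scope.
Local Open Scope ring_scope.

Set Implicit Arguments. Unset Strict Implicit.

Section InnerProduct.
Variables (R : realType) (n : nat).
Implicit Types (x y w : 'rV[R]_n) (a : R).

Lemma dotvC x y : dotv x y = dotv y x.
Proof. by apply: eq_bigr => i _; rewrite mulrC. Qed.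

Lemma dotvDl x y w : dotv (x + y) w = dotv x w + dotv y w.
Proof. by rewrite /dotv -big_split; apply: eq_bigr => i _; rewrite !mxE mulrDl. Qed.

Lemma dotvZl a x w : dotv (a *: x) w = a * dotv x w.
Proof. by rewrite /dotv mulr_sumr; apply: eq_bigr => i _; rewrite !mxE mulrA. Qed.

Lemma dotvNl x w : dotv (- x) w = - dotv x w.
Proof. by rewrite -scaleN1r dotvZl mulN1r. Qed.

Lemma dotvBl x y w : dotv (x - y) w = dotv x w - dotv y w.
Proof. by rewrite dotvDl dotvNl. Qed.

Lemma dotv0l w : dotv 0 w = 0.
Proof. by rewrite -(scale0r (0 : 'rV_n)) dotvZl mul0r. Qed.

Lemma dotvDr x y w : dotv w (x + y) = dotv w x + dotv w y.
Proof. by rewrite dotvC dotvDl !(dotvC w). Qed.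

Lemma dotvZr a x w : dotv w (a *: x) = a * dotv w x.
Proof. by rewrite dotvC dotvZl dotvC. Qed.

Lemma dotvNr x w : dotv w (- x) = - dotv w x.
Proof. by rewrite dotvC dotvNl dotvC. Qed.

Lemma dotvBr x y w : dotv w (x - y) = dotv w x - dotv w y.
Proof. by rewrite dotvDr dotvNr. Qed.

Lemma dotv0r w : dotv w 0 = 0.
Proof. by rewrite dotvC dotv0l. Qed.

Lemma dotvv_ge0 x : 0 <= dotv x x.
Proof. by apply: sumr_ge0 => i _; rewrite -expr2 sqr_ge0. Qed.

Lemma dotvv_eq0 x : dotv x x = 0 -> x = 0.
Proof.
move=> /psumr_eq0P x0; apply/rowP => i; rewrite mxE.
by apply/eqP; rewrite -sqrf_eq0 expr2 x0 // => j _; rewrite -expr2 sqr_ge0.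
Qed.

Lemma norm2_ge0 x : 0 <= norm2 x.
Proof. exact: sqrtr_ge0. Qed.

Lemma norm2_sq x : norm2 x ^+ 2 = dotv x x.
Proof. by rewrite /norm2 sqr_sqrtr // dotvv_ge0. Qed.

Lemma norm2_eq0 x : norm2 x = 0 -> x = 0.
Proof. by move=> x0; apply: dotvv_eq0; rewrite -norm2_sq x0 expr0n. Qed.

Lemma norm2Z a x : 0 <= a -> norm2 (a *: x) = a * norm2 x.
Proof.
move=> a0; rewrite /norm2 dotvZl dotvZr mulrA -expr2.
by rewrite sqrtrM ?sqr_ge0 // sqrtr_sqr ger0_norm.
Qed.

Lemma dotv_le_norm2 x y : dotv x y <= norm2 x * norm2 y.
Proof.
have [xy0|xy_neq0] := eqVneq (norm2 x * norm2 y) 0.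
  move/eqP: xy0; rewrite mulf_eq0 => /orP[] /eqP /norm2_eq0 ->;
    by rewrite ?dotv0l ?dotv0r mulr_ge0 ?norm2_ge0.
have xy_gt0 : 0 < norm2 x * norm2 y.
  by rewrite lt_neqAle eq_sym xy_neq0 mulr_ge0 ?norm2_ge0.
have := dotvv_ge0 (norm2 y *: x - norm2 x *: y).
rewrite !(dotvBl, dotvBr, dotvZl, dotvZr) -!norm2_sq (dotvC y x).
set a := norm2 x; set b := norm2 y; set c := dotv x y.
have -> : b * (b * a ^+ 2 - a * c) - a * (b * c - a * b ^+ 2)
          = 2 * (a * b) * (a * b - c) by ring.
by rewrite pmulr_rge0 ?subr_ge0 // mulr_gt0.
Qed.

End InnerProduct.

Lemma is_derive_along_line (R : realType) (V : normedModType R) (f : V -> R)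
    (x d : V) (c : R) :
  differentiable f (x + c *: d) ->
  is_derive c 1 (fun s : R => f (x + s *: d)) ('d f (x + c *: d) d).
Proof.
move=> df.
have quotE : (fun h : R => h^-1 *: (((fun s => f (x + s *: d)) \o shift c) (h *: 1)
                                     - f (x + c *: d)))
  = (fun h : R => h^-1 *: ((f \o shift (x + c *: d)) (h *: d) - f (x + c *: d))).
  apply/funext => h /=; congr (_ *: (f _ - _)).
  by rewrite /shift scaler1 scalerDl addrCA addrA.
split; first by rewrite /derivable quotE; apply: diff_derivable.
by rewrite /derive quotE -/(derive f _ d) deriveE.
Qed.

Lemma convexR_segment (R : realType) (n : nat) (Omega : set 'rV[R]_n)
    (x z : 'rV[R]_n) (t : R) :
  convexR Omega -> Omega x -> Omega z -> 0 <= t <= 1 -> Omega (x + t *: (z - x)).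
Proof.
move=> Omega_convex Ox Oz /andP[t0 t1].
have := Omega_convex z x (Itv01 t0 t1); rewrite !inE => /(_ Oz Ox).
congr Omega => /=.
by rewrite /conv /= /unstable.onem scalerBl scale1r scalerBr addrCA.
Qed.

Section ProjectionSubproblem.
Variables (R : realType) (n : nat).
Implicit Types (x gx z u w : 'rV[R]_n) (beta om : R).

Lemma DeltapE beta x gx z :
  Deltap beta x gx z = - dotv (z - x) (z - x) / 2 - beta * dotv gx (z - x).
Proof.
rewrite /Deltap /pval /vpt !norm2_sq.
have -> : x - (x - beta *: gx) = beta *: gx by rewrite opprB addrC subrK.
have -> : z - (x - beta *: gx) = (z - x) + beta *: gx by rewrite opprB addrCA addrC.
move: (z - x) => d.
rewrite !(dotvDl, dotvDr, dotvZl, dotvZr) (dotvC gx d).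
by field; rewrite ?pnatr_eq0.
Qed.

Lemma Deltap_le_gapden (Omega : set 'rV[R]_n) beta x gx u w om : Omega w ->
  ((Deltap beta x gx w + om)%:E <= gapden Omega beta x gx u om)%E.
Proof.
move=> Ow; rewrite /gapden.
apply: (@le_trans _ _ ((pval beta x gx x + norm2 (u - vpt beta x gx) ^+ 2 / 2 -
   norm2 (vpt beta x gx) ^+ 2 / 2 + om)%:E + (dotv w u)%:E)%E); last first.
  by apply: leeD2l; apply: ereal_sup_ubound; exists w.
rewrite -EFinD lee_fin /Deltap /pval !norm2_sq.
move: (vpt beta x gx) => v.
have := dotvv_ge0 (w + u - v).
rewrite !(dotvDl, dotvDr, dotvBl, dotvBr, dotvNl, dotvNr).
rewrite ?(dotvC u w) ?(dotvC v w) ?(dotvC v u).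
lra.
Qed.

Lemma inexact_proj_Deltap_le (Omega : set 'rV[R]_n) beta (gamma : R) x gx om z w :
  0 <= gamma -> inexact_proj Omega beta gamma x gx om z -> Omega w ->
  gamma * (Deltap beta x gx w + om) <= Deltap beta x gx z + om.
Proof.
move=> gamma0 [_ [_ [u gap_le]]] Ow; rewrite -lee_fin; apply: le_trans gap_le.
by rewrite EFinM lee_wpmul2l ?lee_fin ?Deltap_le_gapden.
Qed.

Lemma armijo_decrease (f : 'rV[R]_n -> R) x gx z beta (eta t m : R) :
  0 < beta -> 0 <= eta -> 0 <= m <= t -> 0 <= Deltap beta x gx z ->
  armijo f eta x gx (z - x) t ->
  eta * m / beta * Deltap beta x gx z <= f x - f (x + t *: (z - x)).
Proof.
move=> beta0 eta0 /andP[m0 mt] Dp0; rewrite /armijo.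
have G_le : Deltap beta x gx z / beta <= - dotv gx (z - x).
  rewrite ler_pdivrMr // DeltapE; have := dotvv_ge0 (z - x); lra.
have : m * (Deltap beta x gx z / beta) <= t * - dotv gx (z - x).
  by apply: ler_pM; rewrite // divr_ge0 // ltW.
move=> /(ler_wpM2l eta0); lra.
Qed.

End ProjectionSubproblem.

Lemma backtracking_step_bounds (R : realType) (alpha theta : R) (i : nat) :
  0 < alpha <= 1 -> 0 < theta < 1 -> 0 < theta ^+ i * alpha <= 1.
Proof.
move=> /andP[alpha0 alpha1] /andP[theta0 theta1].
rewrite mulr_gt0 ?exprn_gt0 //=.
by apply: mulr_ile1; rewrite ?exprn_ge0 ?exprn_ile1 // ltW.
Qed.

Lemma IGPM_noLS_iterates (R : realType) (n : nat) (Omega : set 'rV[R]_n)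
    (g : 'rV[R]_n -> 'rV[R]_n) (L beta gamma : R) (omega : nat -> R)
    (x z : nat -> 'rV[R]_n) :
  IGPM_noLS Omega g L beta gamma omega x z -> forall k, Omega (x k).
Proof.
move=> [_ [_ [Ox0 step]]]; elim=> [|k _] //.
by rewrite (step k).2; case: (step k).1.
Qed.

Lemma IGPM_LS_iterates (R : realType) (n : nat) (Omega : set 'rV[R]_n)
    (f : 'rV[R]_n -> R) (g : 'rV[R]_n -> 'rV[R]_n) (eta alpha beta theta gamma : R)
    (omega : nat -> R) (x z : nat -> 'rV[R]_n) :
  convexR Omega -> IGPM_LS Omega f g eta alpha beta theta gamma omega x z ->
  forall k, Omega (x k).
Proof.
move=> Omega_convex [_ [alpha01 [_ [theta01 [Ox0 step]]]]].
elim=> [|k IHk] //; have [[Oz _] [i [_ [_ ->]]]] := step k.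
apply: convexR_segment => //.
by have /andP[/ltW -> ->] := backtracking_step_bounds i alpha01 theta01.
Qed.

Lemma cvg0_le_scaled (R : realType) (a b : nat -> R) (c : R) :
  0 < c -> (forall k, 0 <= a k) -> (forall k, c * a k <= b k) ->
  b @ \oo --> 0 -> a @ \oo --> 0.
Proof.
move=> c0 a_ge0 ab b0.
have bc0 : (fun k => b k / c) @ \oo --> 0.
  by rewrite -(mul0r c^-1); apply: cvgM => //; exact: cvg_cst.
apply: (squeeze_cvgr _ (cvg_cst 0) bc0).
by near=> k; rewrite a_ge0 /= ler_pdivlMr // mulrC.
Unshelve. all: end_near.
Qed.

Lemma sufficient_decrease_cvg0 (R : realType) (F D : nat -> R) (c lb : R) :
  0 < c -> (forall k, lb <= F k) -> (forall k, 0 <= D k) ->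
  (forall k, c * D k <= F k - F k.+1) -> D @ \oo --> 0.
Proof.
move=> c0 F_lb D_ge0 decrease; apply: (cvg0_le_scaled c0 D_ge0 decrease).
have F_noninc : nonincreasing_seq F.
  apply/nonincreasing_seqP => k; rewrite -subr_ge0.
  exact: le_trans (mulr_ge0 (ltW c0) (D_ge0 k)) (decrease k).
have F_cvg : cvgn F.
  by apply: nonincreasing_is_cvgn => //; exists lb => _ [k _ <-].
rewrite -(subrr (limn F)); apply: cvgB => //; by rewrite cvg_shiftS.
Qed.

Section SmoothObjective.
Variables (R : realType) (n : nat) (Omega : set 'rV[R]_n).
Variables (f : 'rV[R]_n -> R) (g : 'rV[R]_n -> 'rV[R]_n) (L : R).
Hypothesis Omega_convex : convexR Omega.
Hypothesis f_gradient : forall y, Omega y -> is_gradient f y (g y).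
Hypothesis g_lipschitz :
  forall y w, Omega y -> Omega w -> norm2 (g y - g w) <= L * norm2 (y - w).

Lemma dotv_gradient_segment_le x d c : Omega x -> Omega (x + c *: d) -> 0 <= c ->
  dotv (g (x + c *: d)) d <= dotv (g x) d + L * c * dotv d d.
Proof.
move=> Ox Oxd c0; rewrite -lerBlDl -dotvBl.
have := g_lipschitz Oxd Ox; rewrite addrAC subrr add0r norm2Z // => lip.
apply: (le_trans (dotv_le_norm2 _ _)).
by rewrite -norm2_sq expr2 !mulrA ler_wpM2r ?norm2_ge0 // -mulrA.
Qed.

Lemma descent_lemma x z t : Omega x -> Omega z -> 0 <= t <= 1 ->
  f (x + t *: (z - x)) <=
  f x + t * dotv (g x) (z - x) + L * t ^+ 2 / 2 * dotv (z - x) (z - x).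
Proof.
move=> Ox Oz /andP[t0 t1].
set d := z - x; set a := dotv (g x) d; set b := L * dotv d d / 2.
have Oseg s : 0 <= s <= 1 -> Omega (x + s *: d) by exact: convexR_segment.
pose p : {poly R} := a *: 'X + b *: 'X^2.
have pE s : p.[s] = s * a + s ^+ 2 * b by rewrite /p !hornerE /= /b; ring.
have dpE s : (deriv p).[s] = a + 2 * s * b.
  by rewrite /p derivD !derivZ derivX derivXn !hornerE /= /b; ring.
pose psi s := f (x + s *: d) - p.[s].
pose dpsi s := dotv (g (x + s *: d)) d - (deriv p).[s].
have psi_derive (s : R) : 0 <= s <= 1 -> is_derive s 1 psi (dpsi s).
  move=> s01; have [df dfE] := f_gradient (Oseg s s01).
  have := is_derive_along_line df; rewrite dfE => fd.
  exact: is_deriveB fd (is_derive_poly p s).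
have [c] : exists2 c, c \in `[0, t] & psi t - psi 0 = dpsi c * (t - 0).
  apply: MVT_segment => // [s|].
    rewrite in_itv /= => /andP[s0 st].
    by apply: psi_derive; rewrite ltW //= (le_trans (ltW st)).
  apply: derivable_within_continuous => s; rewrite in_itv /= => /andP[s0 st].
  by have [] // := psi_derive s; rewrite s0 (le_trans st).
rewrite in_itv /= => /andP[c0 ct] psiE.
have dpsi_le0 : dpsi c <= 0.
  have c01 : 0 <= c <= 1 by rewrite c0 (le_trans ct).
  have := dotv_gradient_segment_le Ox (Oseg c c01) c0.
  by rewrite /dpsi dpE /b /a; lra.
have : psi t <= psi 0 by rewrite -subr_le0 psiE subr0 mulr_le0_ge0.
by rewrite /psi !pE scale0r addr0 /b /a; lra.
Qed.

Lemma full_step_decrease x z (beta : R) :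
  Omega x -> Omega z -> 0 < beta -> L <= beta^-1 ->
  beta^-1 * Deltap beta x (g x) z <= f x - f z.
Proof.
move=> Ox Oz beta0 L_le.
have := @descent_lemma x z 1 Ox Oz; rewrite ler01 lexx => /(_ isT).
rewrite scale1r addrC subrK expr1n !mul1r mulr1 DeltapE.
set D := dotv (z - x) (z - x); set G := dotv (g x) (z - x).
have LD := ler_wpM2r (dotvv_ge0 (z - x)) L_le; rewrite -/D in LD.
rewrite mulrBr [beta^-1 * (beta * G)]mulrA mulVf ?gt_eqF // mul1r.
lra.
Qed.

Lemma armijo_fail_step_gt x z (beta eta t : R) : Omega x -> Omega z ->
  0 < beta -> eta < 1 -> 0 < t <= 1 -> 0 <= Deltap beta x (g x) z ->
  ~ armijo f eta x (g x) (z - x) t -> 1 - eta < beta * L * t.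
Proof.
move=> Ox Oz beta0 eta1 /andP[t0 t1].
have := @descent_lemma x z t Ox Oz; rewrite (ltW t0) t1 => /(_ isT).
rewrite DeltapE /armijo.
set D := dotv (z - x) (z - x); set G := dotv (g x) (z - x).
move=> descent Dp0 /negP; rewrite -ltNge => fail.
have D0 : 0 <= D := dotvv_ge0 _.
have slope : (1 - eta) * - G < L * t / 2 * D.
  by rewrite -(ltr_pM2l t0); lra.
(* Multiply [slope] by [beta] and compare with [D / 2 <= beta * - G] from [Dp0]. *)
nra.
Qed.

Lemma backtracking_step_ge x z (beta eta alpha theta : R) (i : nat) :
  Omega x -> Omega z -> 0 < L -> 0 < beta -> eta < 1 ->
  0 < alpha <= 1 -> 0 < theta < 1 -> 0 <= Deltap beta x (g x) z ->
  (forall j, (j < i)%N -> ~ armijo f eta x (g x) (z - x) (theta ^+ j * alpha)) ->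
  Num.min alpha (theta * (1 - eta) / (beta * L)) <= theta ^+ i * alpha.
Proof.
move=> Ox Oz L0 beta0 eta1 alpha01 theta01 Dp0 fail.
case: i fail => [|j] fail; first by rewrite expr0 mul1r ge_min lexx.
have gt := armijo_fail_step_gt Ox Oz beta0 eta1
  (backtracking_step_bounds j alpha01 theta01) Dp0 (fail j (ltnSn j)).
have /andP[theta0 _] := theta01.
rewrite ge_min exprS -!mulrA; apply/orP; right.
apply: ler_wpM2l; first exact: ltW.
by rewrite ler_pdivrMr ?mulr_gt0 // mulrC ltW.
Qed.

Lemma IGPM_noLS_Deltap_cvg0 (flow beta gamma : R) (omega : nat -> R)
    (x z : nat -> 'rV[R]_n) :
  0 < L -> (forall y, Omega y -> flow <= f y) ->
  IGPM_noLS Omega g L beta gamma omega x z ->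
  (fun k => Deltap beta (x k) (g (x k)) (z k)) @ \oo --> 0.
Proof.
move=> L0 f_lb alg; have Ox := IGPM_noLS_iterates alg.
case: alg => [beta0 [beta_le [_ step]]].
have L_le : L <= beta^-1 by rewrite -div1r ler_pdivlMr // mulrC -ler_pdivlMr.
apply: (@sufficient_decrease_cvg0 _ (fun k => f (x k)) _ beta^-1 flow) => [|k|k|k].
- by rewrite invr_gt0.
- exact: f_lb.
- by have [[_ []]] := step k.
- by have [[Oz _] ->] := step k; apply: full_step_decrease.
Qed.

Lemma IGPM_LS_Deltap_cvg0 (flow eta alpha beta theta gamma : R) (omega : nat -> R)
    (x z : nat -> 'rV[R]_n) :
  0 < L -> (forall y, Omega y -> flow <= f y) ->
  IGPM_LS Omega f g eta alpha beta theta gamma omega x z ->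
  (fun k => Deltap beta (x k) (g (x k)) (z k)) @ \oo --> 0.
Proof.
move=> L0 f_lb alg; have Ox := IGPM_LS_iterates Omega_convex alg.
case: alg => [/andP[eta0 eta1] [alpha01 [beta0 [theta01 [_ step]]]]].
have /andP[alpha0 _] := alpha01; have /andP[theta0 theta1] := theta01.
set m := Num.min alpha (theta * (1 - eta) / (beta * L)).
have m0 : 0 < m by rewrite lt_min alpha0 /= divr_gt0 ?mulr_gt0 ?subr_gt0.
apply: (@sufficient_decrease_cvg0 _ (fun k => f (x k)) _ (eta * m / beta) flow)
  => [|k|k|k].
- by rewrite !mulr_gt0 ?invr_gt0.
- exact: f_lb.
- by have [[_ []]] := step k.
have [[Oz [Dp0 _]] [i [arm [fail ->]]]] := step k.
apply: armijo_decrease => //; first exact: ltW.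
rewrite (ltW m0) /=.
exact: (backtracking_step_ge (Ox k) Oz L0 beta0 eta1 alpha01 theta01 Dp0 fail).
Qed.

End SmoothObjective.

Unset Implicit Arguments. Set Strict Implicit.

Theorem lemma3p3 (R : realType) (n : nat) (Omega : set 'rV[R]_n)
  (f : 'rV[R]_n -> R) (g : 'rV[R]_n -> 'rV[R]_n) (flow L : R)
  (omega : nat -> R) (beta gamma eta alpha theta : R)
  (x z zstar : nat -> 'rV[R]_n) :
  Omega !=set0 -> closed Omega -> convexR Omega ->
  (forall y, Omega y -> is_gradient f y (g y)) ->
  (forall y, Omega y -> flow <= f y) ->
  0 < L ->
  (forall y w, Omega y -> Omega w -> norm2 (g y - g w) <= L * norm2 (y - w)) ->
  (forall k, 0 <= omega k) -> cvg (series omega @ \oo) ->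
  0 < gamma < 1 ->
  (IGPM_noLS Omega g L beta gamma omega x z \/
   IGPM_LS Omega f g eta alpha beta theta gamma omega x z) ->
  (forall k, Omega (zstar k) /\
     forall y, Omega y ->
       pval beta (x k) (g (x k)) (zstar k) <= pval beta (x k) (g (x k)) y) ->
  ((fun k => Deltap beta (x k) (g (x k)) (z k)) @ \oo --> 0) /\
  ((fun k => Deltap beta (x k) (g (x k)) (zstar k)) @ \oo --> 0).
Proof.
(* Nonemptiness and closedness only ensure that the exact projections exist;
   here they are given as zstar. *)
move=> _ _ Omega_convex f_grad f_lb L0 g_lip omega_ge0 omega_summable
  /andP[gamma0 _] alg zstar_opt.
have proj k : inexact_proj Omega beta gamma (x k) (g (x k)) (omega k) (z k).
  by case: alg => [[_ [_ [_ step]]] | [_ [_ [_ [_ [_ step]]]]]]; case: (step k).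
have Dz_cvg0 : (fun k => Deltap beta (x k) (g (x k)) (z k)) @ \oo --> 0.
  case: alg => alg.
    exact (IGPM_noLS_Deltap_cvg0 Omega_convex f_grad g_lip L0 f_lb alg).
  exact (IGPM_LS_Deltap_cvg0 Omega_convex f_grad g_lip L0 f_lb alg).
split => //.
apply: (cvg0_le_scaled gamma0
  (b := fun k => Deltap beta (x k) (g (x k)) (z k) + omega k)) => [k|k|].
- have [Oz [Dz_ge0 _]] := proj k; have := (zstar_opt k).2 _ Oz.
  by move: Dz_ge0; rewrite /Deltap; lra.
- have := inexact_proj_Deltap_le (ltW gamma0) (proj k) (zstar_opt k).1.
  by have := mulr_ge0 (ltW gamma0) (omega_ge0 k); lra.
- by rewrite -(addr0 0); apply: cvgD => //; exact: cvg_series_cvg_0.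
Qed.
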